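(* Let $f:\mathbb{R}^n\to\mathbb{R}$ be differentiable and $L>0$. Then $f$ satisfies $$\|\nabla f(u_1)-\nabla f(u_2)\|\le L\|u_1-u_2\|\quad\text{for all }(u_1,u_2)\in\mathbb{R}^n\times\mathbb{R}^n$$ if and only if, for all $(u_1,u_2)\in\mathbb{R}^n\times\mathbb{R}^n$, $$f(u_1)\le f(u_2)+\Big\langle \tfrac{\nabla f(u_1)+\nabla f(u_2)}{2},\,u_1-u_2\Big\rangle+\tfrac{L}{4}\|u_1-u_2\|^2-\tfrac{1}{4L}\|\nabla f(u_1)-\nabla f(u_2)\|^2 .$$
   Context: $\|\cdot\|$ is the Euclidean norm and $\langle\cdot,\cdot\rangle$ the standard inner product on $\mathbb{R}^n$. *)

From HB Require Import structures.
From mathcomp Require Import all_boot all_order all_algebra.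
From mathcomp Require Import all_classical all_reals all_analysis.
Set Implicit Arguments. Unset Strict Implicit. Unset Printing Implicit Defensive.
Import Order.TTheory GRing.Theory Num.Theory.
Import numFieldNormedType.Exports.
Local Open Scope ring_scope.

Definition dotv {R : realType} {n : nat} (u v : 'rV[R]_n) : R :=
  \sum_(i < n) u ord0 i * v ord0 i.

(* Euclidean norm on R^n (the library's built-in norm on 'rV is the max norm) *)
Definition enorm {R : realType} {n : nat} (u : 'rV[R]_n) : R :=
  Num.sqrt (dotv u u).

Definition grad {R : realType} {n : nat} (f : 'rV[R]_n -> R) (u : 'rV[R]_n)
  : 'rV[R]_n :=
  \row_(i < n) ('d f u (delta_mx ord0 i : 'rV[R]_n)).

From HB Require Import structures.
From mathcomp Require Import all_boot all_order all_algebra.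
From mathcomp Require Import all_classical all_reals all_analysis.
From mathcomp Require Import ring lra.
Import Order.TTheory GRing.Theory Num.Theory.
Import numFieldNormedType.Exports.
Local Open Scope ring_scope.

(* Forward direction: a Lipschitz gradient gives the two-sided descent
   inequality |f (x + d) - f x - <grad f x, d>| <= L/2 |d|^2, obtained on the
   segment [x, x + d] from the mean value theorem.  Apply its upper half at u2
   and its lower half at u1, both at the point
   z = (u1 + u2)/2 + (grad f u1 - grad f u2)/(2L), and eliminate f z: by an
   exact quadratic identity what remains is the claimed inequality.
   Converse: adding the inequality to its copy with u1 and u2 exchanged cancels
   the values of f and the inner products, leaving
   0 <= L^2 |u1 - u2|^2 - |grad f u1 - grad f u2|^2. *)

Section InnerProduct.
Context {R : realType} {n : nat}.
Implicit Types (u v w : 'rV[R]_n) (k : R).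

Lemma dotvC u v : dotv u v = dotv v u.
Proof. by apply: eq_bigr => i _; rewrite mulrC. Qed.

Lemma dotvDl u v w : dotv (u + v) w = dotv u w + dotv v w.
Proof.
by rewrite /dotv -big_split; apply: eq_bigr => i _; rewrite !mxE mulrDl.
Qed.

Lemma dotvZl k u w : dotv (k *: u) w = k * dotv u w.
Proof. by rewrite /dotv mulr_sumr; apply: eq_bigr => i _; rewrite !mxE mulrA. Qed.

Lemma dotvNl u w : dotv (- u) w = - dotv u w.
Proof. by rewrite -scaleN1r dotvZl mulN1r. Qed.

Lemma dotvBl u v w : dotv (u - v) w = dotv u w - dotv v w.
Proof. by rewrite dotvDl dotvNl. Qed.

Lemma dotvDr u v w : dotv w (u + v) = dotv w u + dotv w v.
Proof. by rewrite dotvC dotvDl !(dotvC w). Qed.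

Lemma dotvZr k u w : dotv w (k *: u) = k * dotv w u.
Proof. by rewrite dotvC dotvZl dotvC. Qed.

Lemma dotvNr u w : dotv w (- u) = - dotv w u.
Proof. by rewrite dotvC dotvNl dotvC. Qed.

Lemma dotvBr u v w : dotv w (u - v) = dotv w u - dotv w v.
Proof. by rewrite dotvDr dotvNr. Qed.

Definition dotvE :=
  (dotvDl, dotvDr, dotvBl, dotvBr, dotvNl, dotvNr, dotvZl, dotvZr).

Lemma dotvv_ge0 u : 0 <= dotv u u.
Proof. by apply: sumr_ge0 => i _; rewrite -expr2 sqr_ge0. Qed.

Lemma enorm_ge0 u : 0 <= enorm u.
Proof. exact: sqrtr_ge0. Qed.

Lemma enorm_sqr u : enorm u ^+ 2 = dotv u u.
Proof. by rewrite sqr_sqrtr // dotvv_ge0. Qed.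

Lemma enormN u : enorm (- u) = enorm u.
Proof. by rewrite /enorm dotvNl dotvNr opprK. Qed.

Lemma enormZ k u : enorm (k *: u) = `|k| * enorm u.
Proof.
by rewrite /enorm dotvZl dotvZr mulrA -expr2 sqrtrM ?sqr_ge0 // sqrtr_sqr.
Qed.

Lemma dotv_le_AMGM k u v : 2 * k * dotv u v <= dotv u u + k ^+ 2 * dotv v v.
Proof.
rewrite -subr_ge0.
suff -> : dotv u u + k ^+ 2 * dotv v v - 2 * k * dotv u v
          = dotv (u - k *: v) (u - k *: v) by exact: dotvv_ge0.
by rewrite !dotvE (dotvC v u); ring.
Qed.

Lemma normr_dotv_le k u v : 0 < k -> dotv u u <= k ^+ 2 * dotv v v ->
  `|dotv u v| <= k * dotv v v.
Proof.
move=> k_gt0 uu_le.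
have := dotv_le_AMGM k u v; have := dotv_le_AMGM k (- u) v.
by rewrite !(dotvNl, dotvNr) opprK ler_norml; nra.
Qed.

End InnerProduct.

Section RealLine.
Context {R : realType}.
Implicit Types (phi dphi : R -> R).

Lemma MVT_quadratic phi dphi (C : R) :
    (forall t : R, is_derive t (1 : R) phi (dphi t)) ->
  exists2 c : R, 0 < c &
    phi 1 - phi 0 - dphi 0 - C = dphi c - dphi 0 - 2 * c * C.
Proof.
move=> phi_derive; pose psi (s : R) := phi s - (dphi 0 * s + C * s ^+ 2).
have psi_derive (t : R) :
    is_derive t (1 : R) psi (dphi t - (dphi 0 + C * (2 * t))).
  apply: is_deriveB => //.
  have -> : (fun s => dphi 0 * s + C * s ^+ 2) = dphi 0 \*: id + C \*: (id * id).
    by apply: funext => s; rewrite /= expr2.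
  apply: is_derive_eq.
  by rewrite /= [(dphi 0)%:A]mulr1 [t%:A]mulr1 /GRing.scale /=; ring.
have psi_cont : {within `[0, 1], continuous psi}%classic.
  apply: continuous_subspaceT => s; apply: differentiable_continuous.
  by apply/derivable1_diffP; have [] := psi_derive s.
have [c /[!in_itv] /andP[c_gt0 _]] :=
  MVT ltr01 (fun t _ => psi_derive t) psi_cont.
rewrite /psi expr1n expr2 !(mulr0, mulr1, subr0, addr0) => psiE.
by exists c => //; lra.
Qed.

Lemma first_order_remainder_le phi dphi (M : R) :
    (forall t : R, is_derive t (1 : R) phi (dphi t)) ->
  (forall c, 0 < c -> `|dphi c - dphi 0| <= M * c) ->
  `|phi 1 - phi 0 - dphi 0| <= M / 2.
Proof.
move=> phi_derive dphi_lip.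
(* With C = M/2 or C = -M/2, the term 2 c C absorbs the bound M c on
   dphi c - dphi 0, whatever point c the mean value theorem returns. *)
have [c c_gt0 upE] := MVT_quadratic _ _ (M / 2) phi_derive.
have [c' c'_gt0 loE] := MVT_quadratic _ _ (- (M / 2)) phi_derive.
have := dphi_lip c c_gt0; have := dphi_lip c' c'_gt0.
rewrite !ler_norml; lra.
Qed.

End RealLine.

Section Gradient.
Context {R : realType} {n : nat} (f : 'rV[R]_n -> R).
Implicit Types (x d : 'rV[R]_n).

Lemma diff_grad x d : 'd f x d = dotv (grad f x) d.
Proof.
rewrite {1}(row_sum_delta d) linear_sum; apply: eq_bigr => i _.
by rewrite linearZ /= mxE mulrC.
Qed.

Lemma is_derive_line x d (t : R) : differentiable f (x + t *: d) ->
  is_derive t 1 (fun s => f (x + s *: d)) (dotv (grad f (x + t *: d)) d).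
Proof.
move=> f_diff.
have quotE : (fun h : R => h^-1 *: (f (x + (h *: 1 + t) *: d) - f (x + t *: d)))
    = (fun h : R => h^-1 *: (f (h *: d + (x + t *: d)) - f (x + t *: d))).
  by apply: funext => h; rewrite [h *: 1]mulr1 scalerDl addrCA.
apply: DeriveDef; first by rewrite /derivable quotE; exact: diff_derivable.
by rewrite /derive quotE -diff_grad -deriveE.
Qed.

End Gradient.

Section LipschitzGradient.
Context {R : realType} {n : nat} {f : 'rV[R]_n -> R} {L : R}.
Hypothesis f_diff : forall x, differentiable f x.
Hypothesis L_gt0 : 0 < L.
Hypothesis grad_lip : forall u1 u2 : 'rV[R]_n,
  enorm (grad f u1 - grad f u2) <= L * enorm (u1 - u2).
Implicit Types (x d : 'rV[R]_n).

Lemma grad_lip_dotv x d (c : R) : 0 < c ->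
  `|dotv (grad f (x + c *: d) - grad f x) d| <= L * c * dotv d d.
Proof.
move=> c_gt0; apply: normr_dotv_le; first exact: mulr_gt0.
have shiftE : x + c *: d - x = c *: d by rewrite addrC addKr.
have := grad_lip (x + c *: d) x.
rewrite shiftE enormZ (ger0_norm (ltW c_gt0)) mulrA => lip.
rewrite -!enorm_sqr -exprMn ler_sqr ?nnegrE ?enorm_ge0 //.
by rewrite mulr_ge0 ?enorm_ge0 // mulr_ge0 // ltW.
Qed.

Lemma descent_lemma x d :
  `|f (x + d) - f x - dotv (grad f x) d| <= L / 2 * dotv d d.
Proof.
have line_derive (t : R) := is_derive_line f x d t (f_diff _).
have := first_order_remainder_le _ _ (L * dotv d d) line_derive.
rewrite scale1r scale0r addr0 mulrAC; apply=> c c_gt0.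
by rewrite -dotvBl mulrAC; exact: grad_lip_dotv.
Qed.

End LipschitzGradient.

Section TwoPointBound.
Context {R : realType} {n : nat} {L : R}.
Implicit Types (g u e w : 'rV[R]_n) (a : R).

Lemma midpoint_quadratic_identity g1 g2 e w : L != 0 ->
  w = (2 * L)^-1 *: (g1 - g2 + L *: e) ->
  dotv g2 w + L / 2 * dotv w w - dotv g1 (w - e) + L / 2 * dotv (w - e) (w - e)
  = dotv (2^-1 *: (g1 + g2)) e + L / 4 * dotv e e
    - (4 * L)^-1 * dotv (g1 - g2) (g1 - g2).
Proof.
move=> L_neq0 ->; rewrite !dotvE (dotvC g2 g1) (dotvC e g1) (dotvC e g2).
by field; rewrite L_neq0 /= ?pnatr_eq0.
Qed.

Lemma two_point_bound_of_descent {g1 g2 u1 u2 w a1 a2 az} : L != 0 ->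
  w = (2 * L)^-1 *: (g1 - g2 + L *: (u1 - u2)) ->
  `|az - a2 - dotv g2 w| <= L / 2 * dotv w w ->
  `|az - a1 - dotv g1 (w - (u1 - u2))|
    <= L / 2 * dotv (w - (u1 - u2)) (w - (u1 - u2)) ->
  a1 <= a2 + dotv (2^-1 *: (g1 + g2)) (u1 - u2) + L / 4 * enorm (u1 - u2) ^+ 2
        - (4 * L)^-1 * enorm (g1 - g2) ^+ 2.
Proof.
move=> L_neq0 wE; have := midpoint_quadratic_identity _ _ _ _ L_neq0 wE.
by rewrite !ler_norml !enorm_sqr => idE /andP[_ up] /andP[lo _]; lra.
Qed.

Lemma lipschitz_of_two_point_bounds {g1 g2 u1 u2 a1 a2} : 0 < L ->
  a1 <= a2 + dotv (2^-1 *: (g1 + g2)) (u1 - u2) + L / 4 * enorm (u1 - u2) ^+ 2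
        - (4 * L)^-1 * enorm (g1 - g2) ^+ 2 ->
  a2 <= a1 + dotv (2^-1 *: (g2 + g1)) (u2 - u1) + L / 4 * enorm (u2 - u1) ^+ 2
        - (4 * L)^-1 * enorm (g2 - g1) ^+ 2 ->
  enorm (g1 - g2) <= L * enorm (u1 - u2).
Proof.
move=> L_gt0 h12; rewrite -[u2 - u1]opprB -[g2 - g1]opprB !enormN dotvNr.
rewrite [g2 + g1]addrC => h21.
have : (4 * L)^-1 * enorm (g1 - g2) ^+ 2 <= L / 4 * enorm (u1 - u2) ^+ 2 by lra.
rewrite ler_pdivrMl ?mulr_gt0 ?ltr0n //.
rewrite [X in _ <= X](_ : _ = (L * enorm (u1 - u2)) ^+ 2); last by field.
by rewrite ler_sqr ?nnegrE ?enorm_ge0 // mulr_ge0 ?enorm_ge0 // ltW.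
Qed.

End TwoPointBound.

Theorem proposition2p1 (R : realType) (n : nat) (f : 'rV[R]_n -> R) (L : R)
    (hf : forall u : 'rV[R]_n, differentiable f u) (hL : 0 < L) :
  (forall u1 u2 : 'rV[R]_n,
      enorm (grad f u1 - grad f u2) <= L * enorm (u1 - u2)) <->
  (forall u1 u2 : 'rV[R]_n,
      f u1 <= f u2 + dotv ((2%:R)^-1 *: (grad f u1 + grad f u2)) (u1 - u2)
              + L / 4%:R * enorm (u1 - u2) ^+ 2
              - (4%:R * L)^-1 * enorm (grad f u1 - grad f u2) ^+ 2).
Proof.
split=> [grad_lip u1 u2 | bound u1 u2]; last first.
  exact: lipschitz_of_two_point_bounds hL (bound u1 u2) (bound u2 u1).
pose w := (2 * L)^-1 *: (grad f u1 - grad f u2 + L *: (u1 - u2)).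
have zE : u1 + (w - (u1 - u2)) = u2 + w by rewrite opprB addrCA subrKC addrC.
have := descent_lemma hf hL grad_lip u1 (w - (u1 - u2)); rewrite zE.
exact: two_point_bound_of_descent (lt0r_neq0 hL) (erefl w)
  (descent_lemma hf hL grad_lip u2 w).
Qed.
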